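(* Let $N\ge 2$ and let $A=J-I$ be the adjacency matrix of the complete graph $K_N$ ($J$ the all-ones matrix). For integers $k\ge1$, $m\ge1$ define $$\mathcal A[k,m]=\sum_{\substack{j_1+\cdots+j_k=m\\ j_i\ge1}}\ \prod_{i=1}^k (A^{j_i})_{11}.$$ Then $\mathcal A[k,m]=0$ whenever $k>m/2$, and for $1\le k\le m/2$, $$\mathcal A[k,m]=(-1)^m(N-1)^k\sum_{r=0}^{m-2k}\binom{k+r-1}{r}\binom{m-k-r-1}{m-2k-r}(-1)^r(N-1)^r.$$ Moreover $\mathcal A[1,m]=\sum_{j=1}^{m-1}(-1)^{m-1-j}(N-1)^j$.
   Context: $(A^{j})_{11}$ is the number of closed walks of length $j$ starting and ending at node $1$. *)

From mathcomp Require Import all_boot all_order all_algebra.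
Set Implicit Arguments. Unset Strict Implicit. Unset Printing Implicit Defensive.
Import Order.TTheory GRing.Theory Num.Theory.
Local Open Scope ring_scope.

Definition adjK (N : nat) : 'M[int]_N := const_mx 1 - 1%:M.

(* Compositions are encoded as functions 'I_k -> 'I_m.+1 (each part <= m). *)
Definition calA (N : nat) (i1 : 'I_N) (k m : nat) : int :=
  \sum_(f : {ffun 'I_k -> 'I_m.+1} |
          [forall i, (0 < f i)%N] && (\sum_(i < k) (f i : nat) == m)%N)
     \prod_(i < k) (((adjK N) ^+ (f i)) i1 i1).

From mathcomp Require Import all_boot all_order all_algebra.
From mathcomp Require Import zify ring.
Set Implicit Arguments.
Unset Strict Implicit.
Unset Printing Implicit Defensive.
Import Order.TTheory GRing.Theory Num.Theory.
Local Open Scope ring_scope.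

(* Since J^2 = N J, the powers of A = J - I are A^j = c_j J + (-1)^j I, so the
   diagonal entries a_j of A^j do not depend on the vertex and have generating
   series (N - 1) X^2 / ((1 - (N - 1) X) (1 + X)).  calA[k, m] is the coefficient
   of X^m in the k-th power of this series; expanding (1 - (N - 1) X)^-k and
   (1 + X)^-k as negative binomial series gives the formula.  Truncating all
   series above degree m leaves that coefficient unchanged. *)

Lemma sum_bin_diag c r : (\sum_(i < r.+1) 'C(c + i, i))%N = 'C(c.+1 + r, r).
Proof.
elim: r => [|r IHr]; first by rewrite big_ord1 !addn0 !bin0.
by rewrite big_ord_recr /= IHr -addSnnS [in RHS]addnS binS addnC.
Qed.

Section TruncatedPowers.
Variable R : comNzRingType.
Implicit Types p q : {poly R}.

Lemma take_poly_mul_take M p q :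
  take_poly M (p * q) = take_poly M (take_poly M p * take_poly M q).
Proof.
apply/polyP => i; rewrite !coef_take_poly; case: ifP => // ltiM.
rewrite !coefM; apply: eq_bigr => j _; have ltji := ltn_ord j.
by rewrite !coef_take_poly !ifT //; lia.
Qed.

Lemma take_poly_exp_take M p k : take_poly M (p ^+ k) = take_poly M (take_poly M p ^+ k).
Proof.
have take_take q : take_poly M (take_poly M q) = take_poly M q.
  exact/take_poly_id/size_take_poly.
elim: k => [|k IHk]; first by rewrite !expr0.
by rewrite !exprS take_poly_mul_take IHk [RHS]take_poly_mul_take take_take.
Qed.

Lemma coef_exp_take_poly M p k m : (m < M)%N -> (take_poly M p ^+ k)`_m = (p ^+ k)`_m.
Proof.
move=> ltmM; have := congr1 (fun q => q`_m) (take_poly_exp_take M p k).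
by rewrite !coef_take_poly ltmM => ->.
Qed.

Lemma coef_exp_ffun M p k m : (size p <= M)%N ->
  (p ^+ k)`_m = \sum_(f : {ffun 'I_k -> 'I_M} | (\sum_(i < k) (f i : nat) == m)%N)
                  \prod_(i < k) p`_(f i).
Proof.
move=> szp; rewrite -{1}[p](take_poly_id szp) /take_poly poly_def.
rewrite -{1}[k]card_ord -prodr_const bigA_distr_bigA coef_sum [RHS]big_mkcond /=.
apply: eq_bigr => f _.
rewrite (eq_bigr (fun i => (p`_(f i))%:P * 'X^(f i))) => [|i _]; last by rewrite mul_polyC.
rewrite big_split /= -rmorph_prod prodrXr coefCM coefXn eq_sym.
by case: (_ == m); rewrite ?mulr1 ?mulr0.
Qed.

Definition geom_poly M (x : R) : {poly R} := \poly_(i < M) x ^+ i.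

Lemma coef_geom_poly_exp M x c r : (r < M)%N ->
  (geom_poly M x ^+ c.+1)`_r = 'C(c + r, r)%:R * x ^+ r.
Proof.
elim: c r => [|c IHc] r ltrM; first by rewrite expr1 coef_poly ltrM add0n binn mul1r.
rewrite exprSr coefM (eq_bigr (fun i : 'I_r.+1 => 'C(c + i, i)%:R * x ^+ r)).
  by rewrite -mulr_suml -natr_sum sum_bin_diag.
move=> i _; have ltir := ltn_ord i.
rewrite IHc ?coef_poly ?ifT; try lia.
by rewrite -mulrA -exprD subnKC.
Qed.

End TruncatedPowers.

Section CompleteGraphWalks.
Variable R : comNzRingType.

Definition offdiag_walks (n : R) j : R := \sum_(i < j) (-1) ^+ (j.-1 - i) * n ^+ i.
Definition diag_walks (n : R) j : R := offdiag_walks n j + (-1) ^+ j.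

Lemma offdiag_walksS n j : offdiag_walks n j.+1 = n * offdiag_walks n j + (-1) ^+ j.
Proof.
rewrite /offdiag_walks big_ord_recl /= subn0 expr0 mulr1 addrC mulr_sumr.
congr (_ + _); apply: eq_bigr => i _; have ltij := ltn_ord i.
rewrite exprS mulrCA; congr (_ * (_ ^+ _ * _)); rewrite /bump /=; lia.
Qed.

Lemma mul_const_mx1 m N k :
  (const_mx 1 : 'M[R]_(m, N)) *m (const_mx 1 : 'M[R]_(N, k)) = N%:R *: const_mx 1.
Proof.
apply/matrixP => i j; rewrite !mxE.
under eq_bigr do rewrite !mxE mul1r.
by rewrite sumr_const card_ord mulr1.
Qed.

Lemma exp_const_mx1_sub1 N j : (const_mx 1 - 1%:M : 'M[R]_N) ^+ j =
  offdiag_walks (N%:R - 1) j *: const_mx 1 + (-1) ^+ j *: 1%:M.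
Proof.
elim: j => [|j IHj]; first by rewrite expr0 /offdiag_walks big_ord0 scale0r add0r scale1r.
rewrite exprSr IHj -mulmxE mulmxDl !mulmxBr !mulmx1 -!scalemxAl mul_const_mx1 mul1mx scalerA.
apply/matrixP => a b; rewrite !mxE offdiag_walksS.
move: ((a == b)%:R : R) => e; rewrite exprS; ring.
Qed.

Lemma diag_walks_sum n m : (0 < m)%N ->
  diag_walks n m = \sum_(1 <= j < m) (-1) ^+ (m - 1 - j) * n ^+ j.
Proof.
case: m => // t _; rewrite /diag_walks /offdiag_walks big_ord_recl /= subn0 mulr1.
rewrite addrAC exprS mulN1r subrr add0r big_add1 /= big_mkord.
apply: eq_bigr => i _; have ltit := ltn_ord i; congr (_ ^+ _ * _); rewrite /bump /=; lia.
Qed.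

Lemma offdiag_walks_geom M n t : (t < M)%N ->
  offdiag_walks n t.+1 = (geom_poly M n * geom_poly M (-1))`_t.
Proof.
move=> lttM; rewrite coefM /offdiag_walks; apply: eq_bigr => i _.
have ltit := ltn_ord i; rewrite /geom_poly !coef_poly !ifT; [exact: mulrC | lia | lia].
Qed.

(* Agrees with n X^2 / ((1 - n X) (1 + X)) up to degree M + 1. *)
Definition walk_series M (n : R) : {poly R} := n *: (geom_poly M n * geom_poly M (-1)) * 'X^2.

Lemma coef_walk_series M n j : (j <= M.+1)%N ->
  (walk_series M n)`_j = if j == 0%N then 0 else diag_walks n j.
Proof.
rewrite coefMXn coefZ /diag_walks; case: j => [|[|t]] //= lttM.
  by rewrite /offdiag_walks big_ord1 /= subn0 !expr0 mulr1 expr1 addrN.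
by rewrite !subSS subn0 offdiag_walksS -offdiag_walks_geom // [(-1) ^+ t.+2]exprS mulN1r addrK.
Qed.

Lemma coef_walk_series_exp M n k m : (m <= M)%N ->
  (walk_series M n ^+ k.+1)`_m =
    if (m < 2 * k.+1)%N then 0 else
      n ^+ k.+1 * \sum_(r < (m - 2 * k.+1).+1)
        'C(k + r, r)%:R * n ^+ r *
        ('C(k + (m - 2 * k.+1 - r), m - 2 * k.+1 - r)%:R * (-1) ^+ (m - 2 * k.+1 - r)).
Proof.
move=> lemM; rewrite /walk_series exprMn -exprM exprZn exprMn coefMXn coefZ.
case: ltnP => // le2km; congr (_ * _); rewrite coefM; apply: eq_bigr => r _.
by have ltr := ltn_ord r; rewrite !coef_geom_poly_exp //; lia.
Qed.

End CompleteGraphWalks.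

Lemma adjK_exp_diag N j (i : 'I_N) : (adjK N ^+ j) i i = diag_walks (N%:Z - 1) j.
Proof. by rewrite /adjK exp_const_mx1_sub1 !mxE eqxx !mulr1 natz. Qed.

Lemma calA_coef_exp N (i1 : 'I_N) k m (p : {poly int}) :
    (size p <= m.+1)%N -> p`_0 = 0 ->
    (forall j, (0 < j <= m)%N -> p`_j = (adjK N ^+ j) i1 i1) ->
  calA i1 k m = (p ^+ k)`_m.
Proof.
move=> szp p0 pA; rewrite (coef_exp_ffun _ _ szp).
rewrite (bigID (fun f : {ffun 'I_k -> 'I_m.+1} => [forall i, 0 < f i]%N)) /=.
rewrite [X in _ = _ + X]big1 ?addr0 => [|f /andP[_]]; last first.
  rewrite negb_forall => /existsP[i0]; rewrite -eqn0Ngt => /eqP fi0.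
  by rewrite (bigD1 i0) //= fi0 p0 mul0r.
apply: eq_big => [f|f /andP[/forallP f_gt0 _]]; first exact: andbC.
by apply: eq_bigr => i _; rewrite pA // f_gt0 -ltnS ltn_ord.
Qed.

Lemma calA_walk_series N (i1 : 'I_N) k m : calA i1 k m = (walk_series m (N%:Z - 1) ^+ k)`_m.
Proof.
rewrite -(coef_exp_take_poly (M := m.+1)) //; apply: calA_coef_exp.
- exact: size_take_poly.
- by rewrite coef_take_poly coef_walk_series.
- move=> j /andP[j_gt0 lejm].
  by rewrite coef_take_poly ltnS lejm coef_walk_series ?gtn_eqF ?adjK_exp_diag // ltnW.
Qed.

Theorem mainTheorem2 (N : nat) (hN : (2 <= N)%N) (i1 : 'I_N) (hi1 : nat_of_ord i1 = 0%N) :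
  (forall k m : nat, (1 <= k)%N -> (1 <= m)%N -> (m < 2 * k)%N -> calA i1 k m = 0)
  /\
  (forall k m : nat, (1 <= k)%N -> (2 * k <= m)%N ->
     calA i1 k m =
       (-1) ^+ m * (N%:Z - 1) ^+ k *
       \sum_(0 <= r < (m - 2 * k).+1)
          ('C(k + r - 1, r))%:Z * ('C(m - k - r - 1, m - 2 * k - r))%:Z
          * (-1) ^+ r * (N%:Z - 1) ^+ r)
  /\
  (forall m : nat, (1 <= m)%N ->
     calA i1 1 m = \sum_(1 <= j < m) (-1) ^+ (m - 1 - j) * (N%:Z - 1) ^+ j).
Proof.
split; [|split].
- by case=> [|k] m // _ _ ltm2k; rewrite calA_walk_series coef_walk_series_exp // ltm2k.
- case=> [|k] m // _ le2km; rewrite calA_walk_series coef_walk_series_exp // ltnNge le2km.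
  rewrite big_mkord !mulr_sumr; apply: eq_bigr => r _; have ltr := ltn_ord r.
  set s := (m - 2 * k.+1 - r)%N.
  have -> : (k.+1 + r - 1 = k + r)%N by lia.
  have -> : (m - k.+1 - r - 1 = k + s)%N by rewrite /s; lia.
  have -> : (-1) ^+ s = (-1) ^+ m * (-1) ^+ r :> int.
    rewrite -exprD (_ : m + r = s + (r + k.+1) * 2)%N; last by rewrite /s; lia.
    by rewrite exprD exprM sqrr_sign mulr1.
  rewrite -!natz; ring.
- move=> m m_gt0; rewrite calA_walk_series expr1 coef_walk_series //.
  by rewrite gtn_eqF // diag_walks_sum.
Qed.
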